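(* Let $H$ be a Heyting algebra, $n\ge1$, and let $f_1,\dots,f_n:H\to H$ be monotone polynomials each having a least fixed point $\mu_x.f_i(x)$. Then $x\mapsto\bigwedge_{i=1}^n f_i(x)$ has a least fixed point and $\mu_x.\bigwedge_{i=1}^n f_i(x)=\bigwedge_{i=1}^n\mu_x.f_i(x)$.
   Context: A function $f:H\to H$ is a polynomial if there exist an IPC formula $\phi$, a variable $x$ and a valuation $v$ in $H$ of the variables of $\phi$ other than $x$ such that $f(h)=[\![\phi]\!]_{(v,h/x)}$ for every $h\in H$. Least fixed points are least prefixed points. *)

From Stdlib Require Import Arith PeanoNat.

Record HeytingAlgebra := {
  carrier :> Type;
  hle : carrier -> carrier -> Prop;
  hbot : carrier;
  htop : carrier;
  hmeet : carrier -> carrier -> carrier;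
  hjoin : carrier -> carrier -> carrier;
  himp : carrier -> carrier -> carrier;
  hle_refl : forall a, hle a a;
  hle_trans : forall a b c, hle a b -> hle b c -> hle a c;
  hle_antisym : forall a b, hle a b -> hle b a -> a = b;
  hbot_least : forall a, hle hbot a;
  htop_greatest : forall a, hle a htop;
  hmeet_glb : forall a b c, hle c (hmeet a b) <-> (hle c a /\ hle c b);
  hjoin_lub : forall a b c, hle (hjoin a b) c <-> (hle a c /\ hle b c);
  himp_residual : forall a b c, hle (hmeet c a) b <-> hle c (himp a b)
}.

Arguments hle {_} _ _.
Arguments hbot {_}.
Arguments htop {_}.
Arguments hmeet {_} _ _.
Arguments hjoin {_} _ _.
Arguments himp {_} _ _.

Inductive ipc_formula : Type :=
  | FVar : nat -> ipc_formula
  | FBot : ipc_formula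
  | FTop : ipc_formula
  | FAnd : ipc_formula -> ipc_formula -> ipc_formula
  | FOr  : ipc_formula -> ipc_formula -> ipc_formula
  | FImp : ipc_formula -> ipc_formula -> ipc_formula.

Fixpoint interp (H : HeytingAlgebra) (v : nat -> H) (phi : ipc_formula) : H :=
  match phi with
  | FVar k => v k
  | FBot => hbot
  | FTop => htop
  | FAnd p q => hmeet (interp H v p) (interp H v q)
  | FOr p q => hjoin (interp H v p) (interp H v q)
  | FImp p q => himp (interp H v p) (interp H v q)
  end.

Definition upd (H : HeytingAlgebra) (v : nat -> H) (x : nat) (h : H) : nat -> H :=
  fun k => if Nat.eqb k x then h else v k.

Definition polynomial (H : HeytingAlgebra) (f : H -> H) : Prop :=
  exists (phi : ipc_formula) (x : nat) (v : nat -> H),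
    forall h : H, f h = interp H (upd H v x h) phi.

Definition monotone (H : HeytingAlgebra) (f : H -> H) : Prop :=
  forall a b : H, hle a b -> hle (f a) (f b).

(* m is the least fixed point of f, understood (as in the paper) as the least
   prefixed point: f m <= m and m <= y whenever f y <= y. *)
Definition is_lfp (H : HeytingAlgebra) (f : H -> H) (m : H) : Prop :=
  hle (f m) m /\ forall y : H, hle (f y) y -> hle m y.

Fixpoint bigmeet (H : HeytingAlgebra) (n : nat) (g : nat -> H) : H :=
  match n with
  | 0 => htop
  | S k => hmeet (bigmeet H k g) (g k)
  end.

(* Every polynomial f satisfies a /\ f h <= f (a /\ h), because each IPC
   connective respects the relation "a /\ x <= y and a /\ y <= x".  Hence the
   least fixed point m of a monotone polynomial f obeys a parametrised
   induction rule: if c /\ f y <= y then c /\ m <= y, by minimality of m applied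
   to the prefixed point c -> y.  Applying this rule once per meetand, starting
   from c = top, puts /\_i mu_i below every prefixed point of /\_i f_i; and
   /\_i mu_i is prefixed itself since f_i (/\_j mu_j) <= f_i mu_i <= mu_i. *)
From Stdlib Require Import PeanoNat Lia.

Section Heyting.
Variable H : HeytingAlgebra.
Implicit Types a b c x y h : H.

Lemma hle_meet_l a b : hle (hmeet a b) a.
Proof. exact (proj1 (proj1 (hmeet_glb H a b _) (hle_refl H _))). Qed.

Lemma hle_meet_r a b : hle (hmeet a b) b.
Proof. exact (proj2 (proj1 (hmeet_glb H a b _) (hle_refl H _))). Qed.

Lemma hle_meet_intro c a b : hle c a -> hle c b -> hle c (hmeet a b).
Proof. intros Ha Hb; apply hmeet_glb; auto. Qed.

Lemma hle_join_l a b : hle a (hjoin a b).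
Proof. exact (proj1 (proj1 (hjoin_lub H a b _) (hle_refl H _))). Qed.

Lemma hle_join_r a b : hle b (hjoin a b).
Proof. exact (proj2 (proj1 (hjoin_lub H a b _) (hle_refl H _))). Qed.

Lemma hle_join_elim a b c : hle a c -> hle b c -> hle (hjoin a b) c.
Proof. intros Ha Hb; apply hjoin_lub; auto. Qed.

Lemma hle_imp_intro a b c : hle (hmeet c a) b -> hle c (himp a b).
Proof. apply himp_residual. Qed.

Lemma hle_imp_elim a b c : hle c (himp a b) -> hle (hmeet c a) b.
Proof. apply himp_residual. Qed.

Lemma hmeet_mono a b a' b' :
  hle a a' -> hle b b' -> hle (hmeet a b) (hmeet a' b').
Proof.
  intros Ha Hb; apply hle_meet_intro.
  - exact (hle_trans H _ _ _ (hle_meet_l a b) Ha).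
  - exact (hle_trans H _ _ _ (hle_meet_r a b) Hb).
Qed.

Lemma hmeet_comm a b : hmeet a b = hmeet b a.
Proof.
  apply hle_antisym; apply hle_meet_intro; auto using hle_meet_l, hle_meet_r.
Qed.

Lemma hmeet_assoc a b c : hmeet a (hmeet b c) = hmeet (hmeet a b) c.
Proof.
  apply hle_antisym; repeat apply hle_meet_intro;
    eauto using hle_meet_l, hle_meet_r, hle_trans.
Qed.

Lemma hmeet_top_l a : hmeet htop a = a.
Proof.
  apply hle_antisym; [apply hle_meet_r|].
  apply hle_meet_intro; [apply htop_greatest|apply hle_refl].
Qed.

Definition eqmod a x y : Prop := hle (hmeet a x) y /\ hle (hmeet a y) x.

Lemma eqmod_refl a x : eqmod a x x.
Proof. split; apply hle_meet_r. Qed.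

Lemma hmeet_le_mod a x y x' y' :
  hle (hmeet a x) x' -> hle (hmeet a y) y' ->
  hle (hmeet a (hmeet x y)) (hmeet x' y').
Proof.
  intros Hx Hy; apply hle_meet_intro.
  - eapply hle_trans; [|exact Hx].
    apply hmeet_mono; [apply hle_refl|apply hle_meet_l].
  - eapply hle_trans; [|exact Hy].
    apply hmeet_mono; [apply hle_refl|apply hle_meet_r].
Qed.

(* Distributivity: a /\ (x \/ y) <= z is residuated as x \/ y <= a -> z. *)
Lemma hjoin_le_mod a x y x' y' :
  hle (hmeet a x) x' -> hle (hmeet a y) y' ->
  hle (hmeet a (hjoin x y)) (hjoin x' y').
Proof.
  intros Hx Hy; rewrite hmeet_comm; apply hle_imp_elim.
  apply hle_join_elim; apply hle_imp_intro; rewrite hmeet_comm.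
  - exact (hle_trans H _ _ _ Hx (hle_join_l _ _)).
  - exact (hle_trans H _ _ _ Hy (hle_join_r _ _)).
Qed.

Lemma himp_le_mod a x y x' y' :
  hle (hmeet a x') x -> hle (hmeet a y) y' ->
  hle (hmeet a (himp x y)) (himp x' y').
Proof.
  intros Hx Hy; apply hle_imp_intro.
  eapply hle_trans; [|exact Hy].
  apply hle_meet_intro.
  - eapply hle_trans; apply hle_meet_l.
  - apply hle_trans with (hmeet (himp x y) x); [|apply hle_imp_elim, hle_refl].
    apply hle_meet_intro.
    + eapply hle_trans; [apply hle_meet_l|apply hle_meet_r].
    + eapply hle_trans; [|exact Hx].
      apply hmeet_mono; [apply hle_meet_l|apply hle_refl].
Qed.

Lemma interp_eqmod a (v w : nat -> H) :
  (forall k, eqmod a (v k) (w k)) ->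
  forall phi, eqmod a (interp H v phi) (interp H w phi).
Proof.
  intros Hvw phi.
  induction phi as [k| | |p [Hp Hp'] q [Hq Hq']|p [Hp Hp'] q [Hq Hq']
                   |p [Hp Hp'] q [Hq Hq']]; simpl.
  - apply Hvw.
  - apply eqmod_refl.
  - apply eqmod_refl.
  - split; apply hmeet_le_mod; assumption.
  - split; apply hjoin_le_mod; assumption.
  - split; apply himp_le_mod; assumption.
Qed.

Lemma polynomial_meet_le (f : H -> H) :
  polynomial H f -> forall a h, hle (hmeet a (f h)) (f (hmeet a h)).
Proof.
  intros [phi [x [v Hf]]] a h; rewrite !Hf.
  apply interp_eqmod; intro k; unfold upd.
  destruct (Nat.eqb k x); [|apply eqmod_refl].
  split.
  - eapply hle_trans; apply hle_meet_r.
  - apply hle_meet_intro; [apply hle_meet_l|apply hle_meet_r].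
Qed.

Lemma lfp_meet_induction (f : H -> H) (m : H) :
  polynomial H f -> monotone H f -> is_lfp H f m ->
  forall c y, hle (hmeet c (f y)) y -> hle (hmeet c m) y.
Proof.
  intros Hpoly Hmono [_ Hleast] c y Hc.
  assert (Hpre : hle (f (himp c y)) (himp c y)).
  { apply hle_imp_intro; rewrite hmeet_comm.
    eapply hle_trans; [|exact Hc].
    apply hle_meet_intro; [apply hle_meet_l|].
    eapply hle_trans; [apply (polynomial_meet_le f Hpoly)|].
    apply Hmono; rewrite hmeet_comm; apply hle_imp_elim, hle_refl. }
  rewrite hmeet_comm; exact (hle_imp_elim _ _ _ (Hleast _ Hpre)).
Qed.

Lemma bigmeet_le n (g : nat -> H) i : i < n -> hle (bigmeet H n g) (g i).
Proof.
  induction n as [|n IHn]; intros Hi; [lia|]; simpl.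
  destruct (Nat.eq_dec i n) as [->|Hne]; [apply hle_meet_r|].
  eapply hle_trans; [apply hle_meet_l|apply IHn; lia].
Qed.

Lemma bigmeet_greatest n (g : nat -> H) c :
  (forall i, i < n -> hle c (g i)) -> hle c (bigmeet H n g).
Proof.
  induction n as [|n IHn]; intros Hc; simpl; [apply htop_greatest|].
  apply hle_meet_intro; [apply IHn; intros; apply Hc|apply Hc]; lia.
Qed.

Lemma bigmeet_prefixed n (f : nat -> H -> H) (mu : nat -> H) :
  (forall i, i < n -> monotone H (f i)) ->
  (forall i, i < n -> hle (f i (mu i)) (mu i)) ->
  hle (bigmeet H n (fun i => f i (bigmeet H n mu))) (bigmeet H n mu).
Proof.
  intros Hmono Hpre; apply bigmeet_greatest; intros i Hi.
  eapply hle_trans; [apply (bigmeet_le n _ i Hi)|].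
  eapply hle_trans; [|apply (Hpre i Hi)].
  apply (Hmono i Hi), bigmeet_le, Hi.
Qed.

Lemma bigmeet_meet_induction n (f : nat -> H -> H) (mu : nat -> H) :
  (forall i, i < n -> polynomial H (f i)) ->
  (forall i, i < n -> monotone H (f i)) ->
  (forall i, i < n -> is_lfp H (f i) (mu i)) ->
  forall c y, hle (hmeet c (bigmeet H n (fun i => f i y))) y ->
  hle (hmeet c (bigmeet H n mu)) y.
Proof.
  induction n as [|n IHn]; intros Hpoly Hmono Hlfp c y Hc; simpl in *;
    [exact Hc|].
  (* Trade the n-th meetand f n y for mu n, then absorb mu n into c. *)
  assert (Hlast : hle (hmeet (hmeet c (mu n)) (bigmeet H n (fun i => f i y))) y).
  { rewrite <- hmeet_assoc, (hmeet_comm (mu n)), hmeet_assoc.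
    apply (lfp_meet_induction (f n) (mu n));
      [apply Hpoly|apply Hmono|apply Hlfp|]; try lia.
    rewrite <- hmeet_assoc; exact Hc. }
  rewrite hmeet_assoc, <- (hmeet_assoc c), (hmeet_comm _ (mu n)), hmeet_assoc.
  apply IHn; auto.
Qed.

End Heyting.

Theorem mainTheorem7 (H : HeytingAlgebra) (n : nat) (f : nat -> H -> H)
    (mu : nat -> H) :
  1 <= n ->
  (forall i, i < n -> polynomial H (f i)) ->
  (forall i, i < n -> monotone H (f i)) ->
  (forall i, i < n -> is_lfp H (f i) (mu i)) ->
  is_lfp H (fun x => bigmeet H n (fun i => f i x)) (bigmeet H n mu).
Proof.
  intros _ Hpoly Hmono Hlfp; split.
  - apply bigmeet_prefixed; [exact Hmono|].
    intros i Hi; exact (proj1 (Hlfp i Hi)).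
  - intros y Hy; rewrite <- (hmeet_top_l H (bigmeet H n mu)).
    apply bigmeet_meet_induction with (f := f); try assumption.
    rewrite hmeet_top_l; exact Hy.
Qed.
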